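(* Let $\{\mathcal H,\gamma,\ell,\ell^{(2)}\}$ be null metric hypersurface data, $\theta$ any one-form and $f$ any smooth function on $\mathcal H$. Let $X$ be the vector field $X^b=P^{bc}\theta_c$. Then $$n^b(\mathcal L_X\gamma)_{ab}=(\mathcal L_n\theta)_a-\mathcal L_n\big(\theta(n)\big)\ell_a-2\big(\theta(n)s_a+P^{bc}U_{ab}\theta_c\big),\qquad n^b(\mathcal L_{fn}\gamma)_{ab}=0.$$
   Context: Metric hypersurface data: $\mathcal H$ smooth $\mathfrak n$-manifold with symmetric $(0,2)$-tensor $\gamma$, one-form $\ell$, function $\ell^{(2)}$ such that $\mathcal A((W,a),(V,b))=\gamma(W,V)+a\ell(V)+b\ell(W)+ab\ell^{(2)}$ is non-degenerate on each $T_p\mathcal H\times\mathbb R$. $P$ (symmetric $(2,0)$), $n$, $n^{(2)}$ defined by $\gamma_{ab}n^b+n^{(2)}\ell_a=0$, $\ell_an^a+n^{(2)}\ell^{(2)}=1$, $P^{ab}\ell_b+\ell^{(2)}n^a=0$, $P^{ac}\gamma_{cb}+\ell_bn^a=\delta^a_b$; null means $n^{(2)}=0$. $U_{ab}=\frac12(\mathcal L_n\gamma)_{ab}$ (null case), $F=\frac12d\ell$, $s_a=n^bF_{ba}$, $\theta(n)=\theta_an^a$. *)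

(* Local coordinate model of the hypersurface H:
   a chart identifies a neighbourhood of any point with R^d ('rV[R]_d).
   Tensor fields are given by their component functions. *)
From HB Require Import structures.
From mathcomp Require Import all_boot all_order all_algebra.
From mathcomp Require Import all_classical all_reals all_analysis.
Set Implicit Arguments. Unset Strict Implicit. Unset Printing Implicit Defensive.
Import Order.TTheory GRing.Theory Num.Theory.
Import numFieldNormedType.Exports.
Local Open Scope ring_scope.

Section Defs.
Variables (R : realType) (d : nat).
Local Notation pt := 'rV[R]_d.

Definition sfield := pt -> R.
Definition vfield := 'I_d -> sfield.
Definition tfield := 'I_d -> 'I_d -> sfield.

Definition partial (i : 'I_d) (f : sfield) : sfield :=
  fun x => 'D_(delta_mx 0 i) f x.

Fixpoint Ck (k : nat) (f : sfield) : Prop :=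
  match k with
  | 0 => continuous f
  | k.+1 => (forall x, differentiable f x) /\ forall i, Ck k (partial i f)
  end.
Definition smooth (f : sfield) : Prop := forall k, Ck k f.

Definition lie0 (V : vfield) (f : sfield) : sfield :=
  fun x => \sum_c V c x * partial c f x.
Definition lie1 (V : vfield) (th : vfield) : vfield :=
  fun a x => \sum_c (V c x * partial c (th a) x + th c x * partial a (V c) x).
Definition lie2 (V : vfield) (T : tfield) : tfield :=
  fun a b x => \sum_c (V c x * partial c (T a b) x
                       + T c b x * partial a (V c) x + T a c x * partial b (V c) x).

(* the matrix of the bilinear form A on T_pH x R in coordinates *)
Definition Amx (gam : tfield) (ell : vfield) (ell2 : sfield) (x : pt)
  : 'M[R]_(d + 1) :=
  block_mx (\matrix_(i, j) gam i j x) (\col_i ell i x)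
           (\row_j ell j x) (ell2 x)%:M.

Definition hypersurface_data (gam : tfield) (ell : vfield) (ell2 : sfield)
  (P : tfield) (nv : vfield) (n2 : sfield) : Prop :=
  [/\ (forall a b, smooth (gam a b)) /\ (forall a, smooth (ell a)) /\ smooth ell2,
      (forall a b x, gam a b x = gam b a x),
      (forall x, \det (Amx gam ell ell2 x) != 0),
      (forall a b x, P a b x = P b a x) &
      [/\ forall a x, \sum_b gam a b x * nv b x + n2 x * ell a x = 0,
          forall x, \sum_a ell a x * nv a x + n2 x * ell2 x = 1,
          forall a x, \sum_b P a b x * ell b x + ell2 x * nv a x = 0 &
          forall a b x, \sum_c P a c x * gam c b x + ell b x * nv a x
                        = (a == b)%:R ] ].

Definition null_data gam ell ell2 P nv n2 : Prop :=
  hypersurface_data gam ell ell2 P nv n2 /\ forall x, n2 x = 0.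

Definition Ut (gam : tfield) (nv : vfield) : tfield :=
  fun a b x => 2^-1 * lie2 nv gam a b x.
Definition Ft (ell : vfield) : tfield :=
  fun a b x => 2^-1 * (partial a (ell b) x - partial b (ell a) x).
Definition sv (ell : vfield) (nv : vfield) : vfield :=
  fun a x => \sum_b nv b x * Ft ell b a x.
Definition contr (th : vfield) (V : vfield) : sfield :=
  fun x => \sum_a th a x * V a x.
Definition raise (P : tfield) (th : vfield) : vfield :=
  fun b x => \sum_c P b c x * th c x.
Definition scalev (f : sfield) (V : vfield) : vfield := fun a x => f x * V a x.

End Defs.

(* Write [i_W T] for the contraction [T_ab W^b].  Since [i_n gamma = 0] in the null case,
   the Leibniz rule [L_V (i_W T) = i_W (L_V T) + i_[V,W] T] gives
   [i_n (L_V gamma) = i_[n,V] gamma] for every vector field [V].  For [V = f n] the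
   bracket [n(f) n] is again null.  For [V = X] the same Leibniz rule, read along [n],
   gives [i_[n,X] gamma = L_n (i_X gamma) - i_X (L_n gamma)], where
   [i_X gamma = theta - theta(n) ell] (from [P gamma + ell (x) n = id]),
   [i_X (L_n gamma) = 2 U(X, .)] and [L_n ell = 2 s] (because [ell(n) = 1]). *)
From HB Require Import structures.
From mathcomp Require Import all_boot all_order all_algebra.
From mathcomp Require Import all_classical all_reals all_analysis.
From mathcomp Require Import ring.
Import Order.TTheory GRing.Theory Num.Theory.
Import numFieldNormedType.Exports.
Local Open Scope ring_scope.

Section Partial.
Context {R : realType} {d : nat}.
Implicit Types (f g : sfield R d) (x : 'rV[R]_d) (i : 'I_d).

Lemma smooth_differentiable f x : smooth f -> differentiable f x.
Proof. by move=> /(_ 1%N) [+ _]; apply. Qed.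

Lemma partial_cst i (c : R) x : partial i (fun=> c) x = 0.
Proof. exact: derive_cst. Qed.

Lemma partialB i f g x : differentiable f x -> differentiable g x ->
  partial i (fun y => f y - g y) x = partial i f x - partial i g x.
Proof. by move=> /diff_derivable df /diff_derivable dg; apply: deriveB. Qed.

Lemma partialM i f g x : differentiable f x -> differentiable g x ->
  partial i (fun y => f y * g y) x = f x * partial i g x + g x * partial i f x.
Proof. by move=> /diff_derivable df /diff_derivable dg; apply: deriveM. Qed.

Lemma differentiable_sum_mul n (F G : 'I_n -> sfield R d) x :
  (forall k, differentiable (F k) x) -> (forall k, differentiable (G k) x) ->
  differentiable (fun y => \sum_k F k y * G k y) x.
Proof.
move=> dF dG; rewrite -(fct_sumE _ _ (fun k y => F k y * G k y)).
by apply: differentiable_sum => k; apply: differentiableM.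
Qed.

Lemma partial_sum_mul i n (F G : 'I_n -> sfield R d) x :
  (forall k, differentiable (F k) x) -> (forall k, differentiable (G k) x) ->
  partial i (fun y => \sum_k F k y * G k y) x
  = \sum_k (F k x * partial i (G k) x + G k x * partial i (F k) x).
Proof.
move=> dF dG; rewrite /partial -(fct_sumE _ _ (fun k y => F k y * G k y)).
rewrite derive_sum => [|k].
  by apply: eq_bigr => k _; apply: partialM.
exact/diff_derivable/differentiableM.
Qed.

End Partial.

Section LieCalculus.
Context {R : realType} {d : nat}.
Local Notation pt := 'rV[R]_d.
Implicit Types (V W om : vfield R d) (T : tfield R d) (f : sfield R d) (x : pt).

Definition icontr T W : vfield R d := fun a x => \sum_b T a b x * W b x.

Definition bracket V W : vfield R d :=
  fun b x => \sum_c (V c x * partial c (W b) x - W c x * partial c (V b) x).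

Lemma lie1B V th om a x :
  differentiable (th a) x -> differentiable (om a) x ->
  lie1 V (fun a y => th a y - om a y) a x = lie1 V th a x - lie1 V om a x.
Proof.
move=> dth dom; rewrite /lie1 -sumrB; apply: eq_bigr => c _.
rewrite partialB //; ring.
Qed.

Lemma lie1M V f om a x :
  differentiable f x -> differentiable (om a) x ->
  lie1 V (fun a y => f y * om a y) a x = lie0 V f x * om a x + f x * lie1 V om a x.
Proof.
move=> df dom; rewrite /lie1 /lie0 mulr_suml mulr_sumr -big_split.
by apply: eq_bigr => c _; rewrite /= partialM //; ring.
Qed.

Lemma lie1_icontr V T W a x :
  (forall b, differentiable (T a b) x) -> (forall b, differentiable (W b) x) ->
  lie1 V (icontr T W) a x
  = \sum_b lie2 V T a b x * W b x + \sum_b T a b x * bracket V W b x.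
Proof.
move=> dT dW; rewrite /lie1 /icontr /lie2 /bracket.
under eq_bigr => c _ do rewrite partial_sum_mul //.
(* The [T_ac (d_b V^c) W^b] part of [i_W (L_V T)] cancels the [- W^c d_c V^b] part of
   [i_[V,W] T]. *)
have relabel : \sum_b \sum_c T a c x * partial b (V c) x * W b x
             = \sum_b \sum_c T a b x * W c x * partial c (V b) x.
  by rewrite exchange_big; apply: eq_bigr => b _; apply: eq_bigr => c _; ring.
transitivity (\sum_c \sum_b (V c x * (T a b x * partial c (W b) x
                                      + W b x * partial c (T a b) x)
                             + T c b x * W b x * partial a (V c) x)).
  by apply: eq_bigr => c _; rewrite mulr_sumr mulr_suml -big_split.
rewrite exchange_big /=.
transitivity (\sum_b \sum_c ((V c x * partial c (T a b) x
                                + T c b x * partial a (V c) x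
                                + T a c x * partial b (V c) x) * W b x
                               + T a b x * (V c x * partial c (W b) x
                                            - W c x * partial c (V b) x))
              + (\sum_b \sum_c T a b x * W c x * partial c (V b) x
                 - \sum_b \sum_c T a c x * partial b (V c) x * W b x)).
  rewrite -sumrB -big_split; apply: eq_bigr => b _.
  rewrite -sumrB -big_split; apply: eq_bigr => c _ /=; ring.
rewrite relabel subrr addr0 -big_split; apply: eq_bigr => b _.
by rewrite mulr_suml mulr_sumr -big_split.
Qed.

Lemma bracketC V W b x : bracket V W b x = - bracket W V b x.
Proof. by rewrite /bracket -sumrN; apply: eq_bigr => c _; rewrite opprB. Qed.

Lemma icontr_lie2_degenerate V T nv a x :
  (forall a y, icontr T nv a y = 0) ->
  (forall b, differentiable (T a b) x) -> (forall b, differentiable (nv b) x) ->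
  \sum_b nv b x * lie2 V T a b x = \sum_b T a b x * bracket nv V b x.
Proof.
move=> Tn0 dT dn; have := lie1_icontr V T nv a x dT dn.
have -> : icontr T nv = fun _ _ => 0 by apply/funext => b; apply/funext => y.
rewrite /lie1 big1 => [/eqP|c _]; last by rewrite partial_cst mul0r mulr0 addr0.
rewrite eq_sym addr_eq0 => /eqP lie2n.
under eq_bigr do rewrite mulrC.
by rewrite lie2n -sumrN; apply: eq_bigr => b _; rewrite bracketC mulrN opprK.
Qed.

Lemma bracket_scalev V f b x :
  differentiable f x -> differentiable (V b) x ->
  bracket V (scalev f V) b x = lie0 V f x * V b x.
Proof.
move=> df dV; rewrite /bracket /lie0 /scalev mulr_suml.
by apply: eq_bigr => c _; rewrite partialM //; ring.
Qed.

Lemma icontr_lie2_scalev_degenerate f T nv a x :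
  (forall a y, icontr T nv a y = 0) -> differentiable f x ->
  (forall b, differentiable (T a b) x) -> (forall b, differentiable (nv b) x) ->
  \sum_b nv b x * lie2 (scalev f nv) T a b x = 0.
Proof.
move=> Tn0 df dT dn; rewrite (icontr_lie2_degenerate _ _ _ _ _ Tn0) //.
under eq_bigr => b _ do rewrite bracket_scalev //.
transitivity (lie0 nv f x * icontr T nv a x); last by rewrite Tn0 mulr0.
by rewrite mulr_sumr; apply: eq_bigr => b _; ring.
Qed.

Lemma lie1_sv (ell nv : vfield R d) (c : R) a x :
  (forall y, \sum_b ell b y * nv b y = c) ->
  (forall b, differentiable (ell b) x) -> (forall b, differentiable (nv b) x) ->
  lie1 nv ell a x = 2 * sv ell nv a x.
Proof.
move=> elln dl dn.
have : partial a (fun y => \sum_b ell b y * nv b y) x = 0.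
  by rewrite (_ : (fun y => _) = fun=> c) ?partial_cst //; apply/funext.
rewrite partial_sum_mul // => dlln.
rewrite -[LHS]subr0 -[X in _ - X]dlln /lie1 /sv /Ft mulr_sumr -sumrB.
by apply: eq_bigr => b _ /=; field.
Qed.

Lemma sum_raise (P T : tfield R d) th a x :
  \sum_b \sum_c P b c x * T a b x * th c x = \sum_b T a b x * raise P th b x.
Proof.
by apply: eq_bigr => b _; rewrite /raise mulr_sumr; apply: eq_bigr => c _; ring.
Qed.

Lemma icontr_raise (gam P : tfield R d) (ell nv th : vfield R d) a x :
  (forall a b, gam a b x = gam b a x) -> (forall a b, P a b x = P b a x) ->
  (forall a b, \sum_c P a c x * gam c b x + ell b x * nv a x = (a == b)%:R) ->
  icontr gam (raise P th) a x = th a x - contr th nv x * ell a x.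
Proof.
move=> gsym Psym Pgam; rewrite /icontr /raise /contr.
transitivity (\sum_c th c x * \sum_b P c b x * gam b a x).
  under eq_bigr do rewrite mulr_sumr.
  rewrite exchange_big; apply: eq_bigr => c _; rewrite mulr_sumr.
  by apply: eq_bigr => b _; rewrite gsym Psym; ring.
transitivity (\sum_c (th c x * (c == a)%:R - th c x * nv c x * ell a x)).
  apply: eq_bigr => c _.
  have -> : \sum_b P c b x * gam b a x = (c == a)%:R - ell a x * nv c x.
    by rewrite -Pgam addrK.
  ring.
rewrite sumrB -mulr_suml; congr (_ - _).
under eq_bigr do rewrite mulr_natr mulrb.
by rewrite -big_mkcond big_pred1_eq.
Qed.

End LieCalculus.

Theorem lemmaC3 (R : realType) (d : nat)
  (gam : tfield R d) (ell : vfield R d) (ell2 : sfield R d)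
  (P : tfield R d) (nv : vfield R d) (n2 : sfield R d)
  (th : vfield R d) (f : sfield R d) :
  null_data gam ell ell2 P nv n2 ->
  (forall a b, smooth (P a b)) -> (forall a, smooth (nv a)) ->
  (forall a, smooth (th a)) -> smooth f ->
  let X := raise P th in
  (forall a x,
     \sum_b nv b x * lie2 X gam a b x
     = lie1 nv th a x - lie0 nv (contr th nv) x * ell a x
       - 2 * (contr th nv x * sv ell nv a x
              + \sum_b \sum_c P b c x * Ut gam nv a b x * th c x))
  /\ (forall a x, \sum_b nv b x * lie2 (scalev f nv) gam a b x = 0).
Proof.
move=> [[[sgam [sell _]] gsym _ Psym [gn elln _ Pgam]] null] sP snv sth sf X.
have gn0 a y : icontr gam nv a y = 0 by rewrite -(gn a y) null mul0r addr0.
have elln1 y : \sum_b ell b y * nv b y = 1.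
  by rewrite -(elln y) null mul0r addr0.
have dgam b c y : differentiable (gam b c) y by exact: smooth_differentiable.
have dell b y : differentiable (ell b) y by exact: smooth_differentiable.
have dnv b y : differentiable (nv b) y by exact: smooth_differentiable.
have dth b y : differentiable (th b) y by exact: smooth_differentiable.
have dP b c y : differentiable (P b c) y by exact: smooth_differentiable.
have df y : differentiable f y by exact: smooth_differentiable.
split=> a x.
- have dX b : differentiable (X b) x by exact: differentiable_sum_mul.
  have dthn : differentiable (contr th nv) x by exact: differentiable_sum_mul.
  have dthnell : differentiable (fun y => contr th nv y * ell a y) x.
    exact: differentiableM.
  have gamX : icontr gam X = fun a y => th a y - contr th nv y * ell a y.
    by apply/funext => b; apply/funext => y; apply: icontr_raise.
  have UX : \sum_b lie2 nv gam a b x * X b x = 2 * \sum_b Ut gam nv a b x * X b x.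
    by rewrite mulr_sumr; apply: eq_bigr => b _; rewrite /Ut; field.
  have := lie1_icontr nv gam X a x (dgam a ^~ x) dX.
  rewrite gamX lie1B // lie1M // (lie1_sv ell nv 1 a x elln1) //.
  rewrite (icontr_lie2_degenerate X gam nv a x gn0) // sum_raise => lie1X.
  by rewrite -[LHS](addKr (\sum_b lie2 nv gam a b x * X b x)) -lie1X UX; ring.
- exact: icontr_lie2_scalev_degenerate.
Qed.
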